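(* For any integer $n\ge1$ and real $0<p<1$, $$\sum_{t=0}^{n+1}|B_{n,p}(t-1)-B_{n,p}(t)|\le\frac{1}{\sqrt n}\cdot\frac{4}{\sqrt{p(1-p)}}.$$
   Context: $B_{n,p}(t)=\binom nt p^t(1-p)^{n-t}$ for $t\in[0:n]$ and $B_{n,p}(t)=0$ for $t\notin[0:n]$. *)

From mathcomp Require Import all_boot all_order all_algebra.
Set Implicit Arguments. Unset Strict Implicit. Unset Printing Implicit Defensive.
Import Order.TTheory GRing.Theory Num.Theory.
Local Open Scope ring_scope.

Definition binom_pmf (R : ringType) (n : nat) (p : R) (t : int) : R :=
  match t with
  | Posz k => if (k <= n)%N then ('C(n, k))%:R * p ^+ k * (1 - p) ^+ (n - k) else 0
  | Negz _ => 0
  end.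

(* With s := (n+1) p (1-p), the absorption identities for binomial coefficients give
     s (B_{n,p}(t-1) - B_{n,p}(t)) = (t - (n+1) p) B_{n+1,p}(t),
   so the sum equals E|X - E X| / s for X ~ B_{n+1,p}.  As the weights sum to 1,
   (E|X - E X|)^2 <= Var X = s, hence the sum is at most 1 / sqrt s, and
   s >= n p (1-p). *)
From mathcomp Require Import all_boot all_order all_algebra.
From mathcomp Require Import reals.
From mathcomp Require Import ring lra.
Set Implicit Arguments.
Unset Strict Implicit.
Unset Printing Implicit Defensive.
Import Order.TTheory GRing.Theory Num.Theory.
Local Open Scope ring_scope.

Section BinomialWeight.
Variables (R : comNzRingType) (p : R).

Definition binom_weight (N t : nat) : R :=
  'C(N, t)%:R * p ^+ t * (1 - p) ^+ (N - t).

Lemma binom_pmf_nat n t : binom_pmf n p t%:Z = binom_weight n t.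
Proof.
rewrite /= /binom_weight; case: leqP => // lt_n_t.
by rewrite bin_small // !mul0r.
Qed.

Lemma binom_pmf_succ_pred n t : binom_pmf n p (t.+1%:Z - 1) = binom_weight n t.
Proof. by rewrite intS addrC addKr binom_pmf_nat. Qed.

Lemma mul_binom_pmf_pred n t :
  n.+1%:R * p * binom_pmf n p (t%:Z - 1) = t%:R * binom_weight n.+1 t.
Proof.
case: t => [|t]; first by rewrite mulr0 mul0r.
rewrite binom_pmf_succ_pred /binom_weight subSS.
have bin_diag : n.+1%:R * 'C(n, t)%:R = t.+1%:R * 'C(n.+1, t.+1)%:R :> R.
  by rewrite -!natrM -(mul_bin_diag n.+1).
rewrite exprS.
transitivity (n.+1%:R * 'C(n, t)%:R * (p * p ^+ t * (1 - p) ^+ (n - t))); first by ring.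
by rewrite bin_diag; ring.
Qed.

Lemma mul_binom_weight_down n t :
  n.+1%:R * (1 - p) * binom_weight n t = (n.+1 - t)%:R * binom_weight n.+1 t.
Proof.
rewrite /binom_weight; case: (leqP t n) => [le_tn | lt_nt].
  have bin_down : n.+1%:R * 'C(n, t)%:R = (n.+1 - t)%:R * 'C(n.+1, t)%:R :> R.
    by rewrite -!natrM -(mul_bin_down n.+1).
  rewrite [in (1 - p) ^+ (n.+1 - t)](subSn le_tn) exprS.
  transitivity (n.+1%:R * 'C(n, t)%:R * (p ^+ t * ((1 - p) * (1 - p) ^+ (n - t)))); first by ring.
  by rewrite bin_down; ring.
by rewrite bin_small // (eqnP lt_nt) !mul0r mulr0.
Qed.

Lemma mul_binom_pmf_diff n t : (t <= n.+1)%N ->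
  n.+1%:R * p * (1 - p) * (binom_pmf n p (t%:Z - 1) - binom_pmf n p t%:Z)
  = (t%:R - n.+1%:R * p) * binom_weight n.+1 t.
Proof.
move=> le_t_n1; rewrite binom_pmf_nat.
transitivity ((1 - p) * (n.+1%:R * p * binom_pmf n p (t%:Z - 1))
              - p * (n.+1%:R * (1 - p) * binom_weight n t)); first by ring.
by rewrite mul_binom_pmf_pred mul_binom_weight_down natrB //; ring.
Qed.

Lemma sum_binom_weight N : \sum_(0 <= t < N.+1) binom_weight N t = 1.
Proof.
rewrite big_mkord -(expr1n _ N) -{1}(subrK p 1) exprDn.
by apply: eq_bigr => t _; rewrite /binom_weight -mulr_natl; ring.
Qed.

Lemma sum_binom_weight_shift N (f : nat -> R) :
  \sum_(0 <= t < N.+2) t%:R * f t * binom_weight N.+1 t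
  = N.+1%:R * p * \sum_(0 <= s < N.+1) f s.+1 * binom_weight N s.
Proof.
rewrite big_nat_recl // !mul0r add0r mulr_sumr; apply: eq_bigr => s _.
transitivity (f s.+1 * (s.+1%:R * binom_weight N.+1 s.+1)); first by ring.
by rewrite -mul_binom_pmf_pred binom_pmf_succ_pred; ring.
Qed.

Lemma binom_weight_mean N :
  \sum_(0 <= t < N.+1) t%:R * binom_weight N t = N%:R * p.
Proof.
case: N => [|N]; first by rewrite big_nat1 !mul0r.
rewrite (eq_bigr (fun t => t%:R * 1 * binom_weight N.+1 t)) => [|t _]; last by rewrite mulr1.
by rewrite sum_binom_weight_shift (eq_bigr _ (fun s _ => mul1r _)) sum_binom_weight mulr1.
Qed.

Lemma binom_weight_factorial_moment2 N :
  \sum_(0 <= t < N.+1) t%:R * (t%:R - 1) * binom_weight N t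
  = N%:R * (N%:R - 1) * p ^+ 2.
Proof.
case: N => [|N]; first by rewrite big_nat1 !mul0r.
rewrite sum_binom_weight_shift.
rewrite (eq_bigr (fun s => s%:R * binom_weight N s)) => [|s _]; last by rewrite -natr1 addrK.
by rewrite binom_weight_mean -natr1 addrK; ring.
Qed.

Lemma binom_weight_variance N :
  \sum_(0 <= t < N.+1) binom_weight N t * (t%:R - N%:R * p) ^+ 2
  = N%:R * p * (1 - p).
Proof.
set m := N%:R * p.
rewrite (eq_bigr (fun t => t%:R * (t%:R - 1) * binom_weight N t
    + ((1 - 2%:R * m) * (t%:R * binom_weight N t) + m ^+ 2 * binom_weight N t)))
    => [|t _]; last by ring.
rewrite !big_split /= -!mulr_sumr binom_weight_factorial_moment2.
by rewrite binom_weight_mean sum_binom_weight /m; ring.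
Qed.

End BinomialWeight.

Lemma binom_weight_ge0 (R : numDomainType) (p : R) N t :
  0 <= p <= 1 -> 0 <= binom_weight p N t.
Proof.
case/andP=> p_ge0 p_le1.
by rewrite /binom_weight !mulr_ge0 ?exprn_ge0 ?subr_ge0.
Qed.

Lemma sqr_sum_weighted_norm_le (R : realDomainType) (I : Type) (r : seq I)
    (w x : I -> R) :
  (forall i, 0 <= w i) -> \sum_(i <- r) w i = 1 ->
  (\sum_(i <- r) w i * `|x i|) ^+ 2 <= \sum_(i <- r) w i * x i ^+ 2.
Proof.
move=> w_ge0 sum_w1; set m := \sum_(i <- r) w i * `|x i|.
have : 0 <= \sum_(i <- r) w i * (`|x i| - m) ^+ 2.
  by apply: sumr_ge0 => i _; rewrite mulr_ge0 ?sqr_ge0.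
rewrite (eq_bigr (fun i => w i * x i ^+ 2
    + ((- (2%:R * m)) * (w i * `|x i|) + m ^+ 2 * w i))) => [|i _]; last first.
  by rewrite -[x i ^+ 2]real_normK ?num_real //; ring.
rewrite !big_split /= -!mulr_sumr sum_w1 -/m.
have -> : - (2%:R * m) * m + m ^+ 2 * 1 = - m ^+ 2 by ring.
by rewrite subr_ge0.
Qed.

Lemma binom_mean_abs_dev_le (R : rcfType) (p : R) N : 0 <= p <= 1 ->
  \sum_(0 <= t < N.+1) binom_weight p N t * `|t%:R - N%:R * p|
  <= Num.sqrt (N%:R * p * (1 - p)).
Proof.
move=> p01; have /andP[p_ge0 p_le1] := p01.
have w_ge0 t := binom_weight_ge0 N t p01.
rewrite -[X in X <= _]ger0_norm ?sumr_ge0 // => [|t _]; last by rewrite mulr_ge0.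
rewrite -sqrtr_sqr ler_sqrt ?mulr_ge0 ?subr_ge0 //.
by rewrite -binom_weight_variance sqr_sum_weighted_norm_le // sum_binom_weight.
Qed.

Lemma sum_norm_binom_pmf_diff (R : numFieldType) (p : R) n : 0 < p < 1 ->
  \sum_(0 <= t < n.+2) `|binom_pmf n p (t%:Z - 1) - binom_pmf n p t%:Z|
  = (\sum_(0 <= t < n.+2) binom_weight p n.+1 t * `|t%:R - n.+1%:R * p|)
    / (n.+1%:R * p * (1 - p)).
Proof.
case/andP=> p_gt0 p_lt1; set s := n.+1%:R * p * (1 - p).
have s_gt0 : 0 < s by rewrite !mulr_gt0 ?subr_gt0.
rewrite mulr_suml; apply: eq_big_nat => t /andP[_ le_t_n1].
rewrite -[binom_pmf _ _ _ - _](mulKf (lt0r_neq0 s_gt0)) mul_binom_pmf_diff //.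
rewrite normrM normfV (gtr0_norm s_gt0) normrM [`|binom_weight _ _ _|]ger0_norm.
  by rewrite mulrC [_ * `|_|]mulrC.
by rewrite binom_weight_ge0 // !ltW.
Qed.

Theorem lemma7 (R : realType) (n : nat) (p : R) :
  (1 <= n)%N -> 0 < p -> p < 1 ->
  \sum_(0 <= t < n.+2)
     `|binom_pmf n p (t%:Z - 1) - binom_pmf n p t%:Z|
  <= 1 / Num.sqrt (n%:R) * (4 / Num.sqrt (p * (1 - p))).
Proof.
move=> n_ge1 p_gt0 p_lt1.
have p01 : 0 < p < 1 by rewrite p_gt0.
have q_gt0 : 0 < 1 - p by rewrite subr_gt0.
set s := n.+1%:R * p * (1 - p).
have s_gt0 : 0 < s by rewrite !mulr_gt0.
set a := Num.sqrt n%:R; set b := Num.sqrt (p * (1 - p)); set c := Num.sqrt s.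
have a_gt0 : 0 < a by rewrite sqrtr_gt0 ltr0n.
have b_gt0 : 0 < b by rewrite sqrtr_gt0 mulr_gt0.
have c_gt0 : 0 < c by rewrite sqrtr_gt0.
have ab_le_c : a * b <= c.
  rewrite -sqrtrM ?ler0n // ler_sqrt; last exact: ltW.
  by rewrite /s -mulrA ler_wpM2r ?ler_nat // mulr_ge0 ?ltW.
have sum_le : \sum_(0 <= t < n.+2)
    `|binom_pmf n p (t%:Z - 1) - binom_pmf n p t%:Z| <= c^-1.
  rewrite sum_norm_binom_pmf_diff // -/s ler_pdivrMr // -(sqr_sqrtr (ltW s_gt0)).
  by rewrite -/c expr2 mulKf ?lt0r_neq0 // binom_mean_abs_dev_le // !ltW.
have c_inv_le : c^-1 <= (a * b)^-1 by rewrite lef_pV2 // posrE mulr_gt0.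
have -> : 1 / a * (4 / b) = 4 * (a * b)^-1 by rewrite invfM; ring.
have : 0 <= (a * b)^-1 by rewrite invr_ge0 ltW ?mulr_gt0.
lra.
Qed.
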